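(* Let $G=(V,E)$ be a directed graph and $K\subset V$ a set of $|K|=k$ terminals. Then there exists a reachability-preserving minor $H$ of $G$ whose number of non-terminal vertices $|V(H)\setminus K|$ is $O(k^{3})$.
   Context: A $k$-terminal digraph is a digraph $G=(V,E)$ with a designated terminal set $K\subset V$, $|K|=k$. A minor of a digraph $G$ is any digraph obtained from $G$ by a sequence of vertex deletions, edge deletions and edge contractions (contracting a directed edge $(u,v)$ identifies $u$ and $v$ into one vertex, discarding loops), where terminals are never deleted and no contraction identifies two terminals (a vertex obtained by merging a terminal with non-terminals is identified with that terminal). A digraph $H$ with $K\subseteq V(H)$ is a reachability-preserving minor (RPM) of $G$ if $H$ is a minor of $G$ and for all $x,x'\in K$ there is a directed path from $x$ to $x'$ in $H$ if and only if there is one in $G$. The size of $H$ is $|V(H)\setminus K|$. *)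

From mathcomp Require Import all_boot.
Set Implicit Arguments.
Unset Strict Implicit.
Unset Printing Implicit Defensive.

(* A digraph on vertices drawn from a finite universe T is a pair (V, E) with
   V : {set T} and E : {set T * T}, E \subset V x V (directed edges). Simple
   digraphs: parallel edges are merged. *)

Definition wf_digraph (T : finType) (V : {set T}) (E : {set T * T}) : bool :=
  E \subset setX V V.

Definition ren (T : finType) (z w : T) (x : T) : T := if x == z then w else x.

(* One minor operation, never deleting terminals of K and never identifying
   two terminals; a merged vertex containing a terminal is named by it. *)
Inductive dminor_step (T : finType) (K : {set T})
  : {set T} -> {set T * T} -> {set T} -> {set T * T} -> Prop :=
| DelVertex (V : {set T}) (E : {set T * T}) (v : T) :
    v \in V -> v \notin K ->
    dminor_step K V E (V :\ v) [set e in E | (e.1 != v) && (e.2 != v)]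
| DelEdge (V : {set T}) (E : {set T * T}) (e : T * T) :
    e \in E -> dminor_step K V E V (E :\ e)
| Contract (V : {set T}) (E : {set T * T}) (u v w z : T) :
    (u, v) \in E -> u != v -> ~~ ((u \in K) && (v \in K)) ->
    ((w == u) && (z == v)) || ((w == v) && (z == u)) ->
    z \notin K ->
    dminor_step K V E (V :\ z)
      ([set (ren z w p.1, ren z w p.2) | p in E] :\ (w, w)).

Inductive dminor (T : finType) (K : {set T})
  : {set T} -> {set T * T} -> {set T} -> {set T * T} -> Prop :=
| DMinorRefl (V : {set T}) (E : {set T * T}) : dminor K V E V E
| DMinorStep (V V1 V2 : {set T}) (E E1 E2 : {set T * T}) :
    dminor_step K V E V1 E1 -> dminor K V1 E1 V2 E2 -> dminor K V E V2 E2.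

Definition reach (T : finType) (E : {set T * T}) (x y : T) : bool :=
  connect (fun a b => (a, b) \in E) x y.

Definition is_RPM (T : finType) (K : {set T}) (V : {set T}) (E : {set T * T})
    (V' : {set T}) (E' : {set T * T}) : Prop :=
  [/\ dminor K V E V' E', K \subset V' &
      forall x x', x \in K -> x' \in K -> reach E' x x' = reach E x x'].

Definition rpm_size (T : finType) (K V' : {set T}) : nat := #|V' :\: K|.

From mathcomp Require Import all_boot.
From mathcomp Require Import zify.

Set Implicit Arguments.
Unset Strict Implicit.
Unset Printing Implicit Defensive.

(* Keep applying single minor operations that preserve reachability between
   terminals; this terminates in a minor where every vertex deletion, edge
   deletion and contraction of a non-terminal v along an edge (v, b) breaks
   some terminal pair.  In such a minor each non-terminal v gets a label
   (x, y, t) of terminals: some edge (v, b) lies on every x-y path, and t is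
   reachable from v but not from b (this is what contracting (v, b) breaks).
   Two distinct non-terminals cannot share a label, since whichever of the two
   cut edges comes first on an x-y path would let the b of one reach the t of
   the other.  Hence there are at most k^3 non-terminals. *)

Lemma connect_ind (T : finType) (e : rel T) (P : T -> Prop) x y :
  P x -> (forall a b, P a -> e a b -> P b) -> connect e x y -> P y.
Proof.
move=> Px step /connectP [p pth ->].
elim: p x Px pth => [|a p IH] x Px //= /andP[exa pth].
exact: IH (step _ _ Px exa) pth.
Qed.

Section Reachability.
Variable T : finType.
Implicit Types (E : {set T * T}) (a b v x y : T).

Lemma reach_refl E x : reach E x x.
Proof. exact: connect0. Qed.

Lemma reach_trans E x y z : reach E x y -> reach E y z -> reach E x z.
Proof. exact: connect_trans. Qed.

Lemma reach_edge E x y : (x, y) \in E -> reach E x y.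
Proof. exact: connect1. Qed.

Lemma reach_subset E1 E2 x y : E1 \subset E2 -> reach E1 x y -> reach E2 x y.
Proof. by move=> /subsetP sub; apply: connect_sub => a b /sub; apply: connect1. Qed.

Lemma reach_setD1_cut E a b x y :
  reach E x y -> ~~ reach (E :\ (a, b)) x y -> reach E x a /\ reach E b y.
Proof.
move=> xy nxy.
have [xy'|//] : reach (E :\ (a, b)) x y \/ (reach E x a /\ reach E b y).
  apply: (connect_ind (P := fun z =>
    reach (E :\ (a, b)) x z \/ (reach E x a /\ reach E b z))) xy.
    by left; apply: reach_refl.
  move=> y' z [xy' | [xa by']] y'z.
    case: (eqVneq (y', z) (a, b)) => [[ea ->]|ne].
      by right; split; [rewrite -ea; apply: reach_subset xy'; apply: subsetDl
                       | apply: reach_refl].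
    by left; apply: reach_trans xy' (reach_edge _); rewrite !inE ne.
  by right; split=> //; apply: reach_trans by' (reach_edge y'z).
by rewrite xy' in nxy.
Qed.

Lemma reach_setD1_loop E v x y : reach (E :\ (v, v)) x y = reach E x y.
Proof.
apply/idP/idP; first by apply: reach_subset; apply: subsetDl.
apply: (connect_ind (P := reach (E :\ (v, v)) x)); first exact: reach_refl.
move=> a b xa ab; case: (eqVneq (a, b) (v, v)) => [[ea eb]|ne].
  by rewrite eb; rewrite ea in xa.
by apply: reach_trans xa (reach_edge _); rewrite !inE ne.
Qed.

Lemma reach_setU1 E a b x y : reach (E :|: [set (a, b)]) x y ->
  reach E x y \/ (reach E x a /\ reach E b y).
Proof.
apply: (connect_ind (P := fun z => reach E x z \/ (reach E x a /\ reach E b z))).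
  by left; apply: reach_refl.
move=> y' z xy' /setUP [y'z | /set1P [ey ->]].
  case: xy' => [xy' | [xa by']]; [left | right; split=> //];
    exact: reach_trans (reach_edge y'z).
rewrite {}ey in xy'.
by right; split; [case: xy' => [|[]] | apply: reach_refl].
Qed.

End Reachability.

Section MinorOperations.
Variable T : finType.
Implicit Types (K : {set T}) (E : {set T * T}) (a b v x y : T).

Definition del_vertex_edges E v := [set e in E | (e.1 != v) && (e.2 != v)].

(* Contraction of v into b, as in [Contract] with [z := v] and [w := b]. *)
Definition contract_edges E v b :=
  [set (ren v b p.1, ren v b p.2) | p in E] :\ (b, b).

Definition same_reach K E E' :=
  [forall x in K, forall y in K, reach E' x y == reach E x y].

Lemma same_reachP K E E' :
  reflect (forall x y, x \in K -> y \in K -> reach E' x y = reach E x y)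
          (same_reach K E E').
Proof.
apply: (iffP forall_inP) => [h x y xK yK | h x xK].
  by have /forall_inP/(_ y yK)/eqP := h x xK.
by apply/forall_inP => y yK; rewrite h.
Qed.

Lemma same_reach_trans K E1 E2 E3 :
  same_reach K E1 E2 -> same_reach K E2 E3 -> same_reach K E1 E3.
Proof.
move=> /same_reachP h12 /same_reachP h23; apply/same_reachP => x y xK yK.
by rewrite h23 // h12.
Qed.

Lemma not_same_reach K E E' : ~~ same_reach K E E' ->
  exists x y, [/\ x \in K, y \in K & reach E' x y != reach E x y].
Proof.
by move=> /forall_inPn [x xK /forall_inPn [y yK ne]]; exists x, y.
Qed.

Lemma not_same_reach_subset K E E' : E' \subset E -> ~~ same_reach K E E' ->
  exists x y, [/\ x \in K, y \in K, reach E x y & ~~ reach E' x y].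
Proof.
move=> sub /not_same_reach [x [y [xK yK ne]]]; exists x, y.
move: ne (@reach_subset _ _ _ x y sub).
by case: (reach E' x y); case: (reach E x y) => // _ /(_ isT).
Qed.

Lemma reach_del_sink E v x y : (forall b, (v, b) \notin E) -> y != v ->
  reach E x y -> reach (del_vertex_edges E v) x y.
Proof.
move=> sink yv xy.
have [//|yv'] : reach (del_vertex_edges E v) x y \/ y = v.
  apply: (connect_ind (P := fun z => reach (del_vertex_edges E v) x z \/ z = v)) xy.
    by left; apply: reach_refl.
  move=> a c [xa | av] ac; last by rewrite av (negbTE (sink c)) in ac.
  case: (eqVneq c v) => [|cv]; first by right.
  case: (eqVneq a v) => [av|av]; first by rewrite av (negbTE (sink c)) in ac.
  by left; apply: reach_trans xa (reach_edge _); rewrite inE ac av cv.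
by rewrite yv' eqxx in yv.
Qed.

Lemma ren_id v b x : x != v -> ren v b x = x.
Proof. by rewrite /ren => /negbTE ->. Qed.

Lemma reach_contract E v b x y :
  reach E x y -> reach (contract_edges E v b) (ren v b x) (ren v b y).
Proof.
apply: (connect_ind (P := fun z => reach (contract_edges E v b) (ren v b x) (ren v b z))).
  exact: reach_refl.
move=> a c xa ac; case: (eqVneq (ren v b a, ren v b c) (b, b)) => [[ea ec]|ne].
  by have -> : ren v b c = ren v b a by rewrite ea ec.
apply: reach_trans xa (reach_edge _).
by rewrite in_setD1 ne; apply/imsetP; exists (a, c).
Qed.

Lemma ren_eq_reach E v b x y : (v, b) \in E -> ren v b x = ren v b y ->
  reach (E :|: [set (b, v)]) x y.
Proof.
move=> vb.
have vb' : reach (E :|: [set (b, v)]) v b by apply: reach_edge; rewrite inE vb.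
have bv : reach (E :|: [set (b, v)]) b v by apply: reach_edge; rewrite !inE eqxx orbT.
rewrite /ren; case: ifP => [/eqP->|_]; case: ifP => [/eqP->|_] e.
- exact: reach_refl.
- by rewrite -e.
- by rewrite e.
- by rewrite e; exact: reach_refl.
Qed.

(* Undoing the contraction of v into b may need the reverse edge (b, v). *)
Lemma reach_contract_inv E v b x y : (v, b) \in E ->
  reach (contract_edges E v b) (ren v b x) (ren v b y) ->
  reach (E :|: [set (b, v)]) x y.
Proof.
move=> vb xy.
suff: forall z, ren v b z = ren v b y -> reach (E :|: [set (b, v)]) x z by apply.
apply: (connect_ind (P := fun z' => forall z, ren v b z = z' ->
  reach (E :|: [set (b, v)]) x z)) xy => [z /esym|a' c' xa /setD1P [_]].
  exact: ren_eq_reach.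
move=> /imsetP [[a c] ac [ea ec]] z zc.
apply: reach_trans (ren_eq_reach vb (esym (etrans zc ec))).
by apply: reach_trans (xa a (esym ea)) (reach_edge _); rewrite inE ac.
Qed.

Lemma contract_edges_changed_reach E v b x y : (v, b) \in E -> x != v -> y != v ->
  reach (contract_edges E v b) x y != reach E x y ->
  reach E v y && ~~ reach E b y.
Proof.
move=> vb xv yv changed.
have nxy : ~~ reach E x y.
  apply: contra changed => xy; rewrite xy eqb_id.
  by have := reach_contract v b xy; rewrite !ren_id.
have xy : reach (contract_edges E v b) x y.
  by move: changed; rewrite (negbTE nxy); case: (reach _ x y).
have := reach_contract_inv (x := x) (y := y) vb; rewrite !ren_id // => /(_ xy).
case/reach_setU1 => [xy'|[xb vy]]; first by rewrite xy' in nxy.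
by rewrite vy; apply: contra nxy; apply: reach_trans xb.
Qed.

Lemma del_vertex_edges_subset E v : del_vertex_edges E v \subset E.
Proof. by apply/subsetP => e; rewrite inE => /andP []. Qed.

End MinorOperations.

Definition irreducible_minor (T : finType) (K V : {set T}) (E : {set T * T}) :=
  [/\ forall v, v \in V :\: K -> ~~ same_reach K E (del_vertex_edges E v),
      forall e, e \in E -> ~~ same_reach K E (E :\ e) &
      forall v b, (v, b) \in E -> v \in V :\: K -> v != b ->
        ~~ same_reach K E (contract_edges E v b)].

Section IrreducibleMinor.
Variables (T : finType) (K V : {set T}) (E : {set T * T}).

Definition label_of v (p : T * T * T) :=
  [exists b, [&& (v, b) \in E, [&& p.1.1 \in K, p.1.2 \in K & p.2 \in K],
     reach E p.1.1 p.1.2 && ~~ reach (E :\ (v, b)) p.1.1 p.1.2 &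
     reach E v p.2 && ~~ reach E b p.2]].

Lemma label_of_terminals v p : label_of v p -> p \in setX (setX K K) K.
Proof.
case: p => [[x y] t] /existsP [b /and4P [_ /and3P [xK yK tK] _ _]].
by rewrite !inE xK yK tK.
Qed.

Lemma label_of_inj v v' p : label_of v p -> label_of v' p -> v = v'.
Proof.
case: p => [[x y] t] /existsP [b /and4P [vb _ /andP [xy nxy] /andP [vt nbt]]].
move=> /existsP [b' /and4P [v'b' _ /andP [_ nxy'] /andP [v't nb't]]].
apply/eqP; apply: contraT => vv'.
have ne : (v, b) != (v', b') by apply: contra vv' => /eqP [-> _].
have [xv bY] := reach_setD1_cut xy nxy.
have [xv'|] := boolP (reach (E :\ (v', b')) x v); last first.
  by case/(reach_setD1_cut xv) => _ /reach_trans/(_ vt); rewrite (negbTE nb't).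
have [bY'|] := boolP (reach (E :\ (v', b')) b y); last first.
  by case/(reach_setD1_cut bY) => /reach_trans/(_ v't); rewrite (negbTE nbt).
suff: reach (E :\ (v', b')) x y by rewrite (negbTE nxy').
apply: reach_trans xv' (reach_trans (reach_edge _) bY'); by rewrite !inE ne.
Qed.

Hypothesis irrE : irreducible_minor K V E.

Lemma label_of_exists v : v \in V :\: K -> exists p, label_of v p.
Proof.
case: irrE => delV delE contr vVK; have /setDP [_ vK] := vVK.
have notK u : u \in K -> u != v by apply: contraTneq => ->.
have [x [y [xK yK xy nxy]]] :=
  not_same_reach_subset (del_vertex_edges_subset E v) (delV v vVK).
have [b vb] : exists b, (v, b) \in E.
  apply/existsP; apply: contraNT nxy => /existsPn sink.
  exact: reach_del_sink sink (notK y yK) xy.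
have vb' : v != b.
  apply: contraTneq (delE _ vb) => <-; rewrite negbK; apply/same_reachP => ? ? _ _.
  exact: reach_setD1_loop.
have [x' [y' [x'K y'K xy' nxy']]] :=
  not_same_reach_subset (subsetDl E [set (v, b)]) (delE _ vb).
have [s [t [sK tK st]]] := not_same_reach (contr v b vb vVK vb').
have /andP [vt nbt] := contract_edges_changed_reach vb (notK s sK) (notK t tK) st.
by exists (x', y', t); apply/existsP; exists b; rewrite vb x'K y'K tK xy' nxy' vt nbt.
Qed.

Lemma irreducible_minor_card : #|V :\: K| <= #|K| ^ 3.
Proof.
pose lab v := odflt (v, v, v) [pick p | label_of v p].
have labP v : v \in V :\: K -> label_of v (lab v).
  move=> vVK; rewrite /lab; case: pickP => [p //|none].
  by have [p] := label_of_exists vVK; rewrite none.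
have lab_inj : {in V :\: K &, injective lab}.
  by move=> v v' vVK v'VK e; apply: (label_of_inj (labP v vVK)); rewrite e labP.
rewrite -(card_in_imset lab_inj).
have /subset_leq_card : lab @: (V :\: K) \subset setX (setX K K) K.
  by apply/subsetP => _ /imsetP [v vVK ->]; apply: label_of_terminals (labP v vVK).
by rewrite !cardsX; lia.
Qed.

End IrreducibleMinor.

Lemma dminor_rcons (T : finType) (K V1 V2 V3 : {set T}) (E1 E2 E3 : {set T * T}) :
  dminor K V1 E1 V2 E2 -> dminor_step K V2 E2 V3 E3 -> dminor K V1 E1 V3 E3.
Proof.
elim=> [V E st | V V' V'' E E' E'' st0 _ IH st]; last exact: DMinorStep st0 (IH st).
exact: DMinorStep st (DMinorRefl _ _ _).
Qed.

Lemma irreducible_or_step (T : finType) (K V : {set T}) (E : {set T * T}) :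
  K \subset V ->
  irreducible_minor K V E \/
  exists V' E', [/\ dminor_step K V E V' E', K \subset V', same_reach K E E' &
                   #|V'| + #|E'| < #|V| + #|E|].
Proof.
move=> KV; have KVD v : v \in V :\: K -> K \subset V :\ v.
  by case/setDP=> _ vK; rewrite subsetD1 KV.
have smaller v (E' : {set T * T}) : v \in V :\: K -> #|E'| <= #|E| ->
    #|V :\ v| + #|E'| < #|V| + #|E|.
  by case/setDP=> /properD1/proper_card; lia.
case: (boolP [exists v in V :\: K, same_reach K E (del_vertex_edges E v)]).
  case/exists_inP => v vVK same; right; exists (V :\ v), (del_vertex_edges E v).
  have /setDP [vV vK] := vVK.
  split; [exact: DelVertex | exact: KVD | by [] |].
  exact/smaller/subset_leq_card/del_vertex_edges_subset.
move=> /exists_inPn delV.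
case: (boolP [exists e in E, same_reach K E (E :\ e)]).
  case/exists_inP => e eE same; right; exists V, (E :\ e).
  split; [exact: DelEdge | by [] | by [] |].
  by rewrite ltn_add2l; apply/proper_card/properD1.
move=> /exists_inPn delE.
case: (boolP [exists e in E, [&& e.1 \in V :\: K, e.1 != e.2 &
                                 same_reach K E (contract_edges E e.1 e.2)]]).
  case/exists_inP => -[v b] vb /= /and3P [vVK vb' same]; right.
  exists (V :\ v), (contract_edges E v b); have /setDP [_ vK] := vVK.
  split; [ | exact: KVD | by [] |].
    by apply: (@Contract _ K V E v b b v); rewrite ?(negbTE vK) ?eqxx ?orbT.
  apply: smaller vVK _; apply: leq_trans (subset_leq_card (subsetDl _ _)) _.
  exact: leq_imset_card.
move=> /exists_inPn contr; left; split.
- by move=> v /delV.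
- by move=> e /delE.
- by move=> v b vb vVK vb'; have := contr _ vb; rewrite /= vVK vb'.
Qed.

Lemma exists_irreducible_RPM (T : finType) (K V : {set T}) (E : {set T * T}) :
  K \subset V -> exists V' E', is_RPM K V E V' E' /\ irreducible_minor K V' E'.
Proof.
move=> KV.
suff: forall n (V1 : {set T}) (E1 : {set T * T}), #|V1| + #|E1| < n ->
    dminor K V E V1 E1 -> K \subset V1 -> same_reach K E E1 ->
    exists V' E', is_RPM K V E V' E' /\ irreducible_minor K V' E'.
  by apply; [exact: ltnSn | exact: DMinorRefl | by [] | apply/same_reachP].
elim=> // n IH V1 E1 lt minor KV1 same.
have [irr|[V2 [E2 [st KV2 same12 lt12]]]] := irreducible_or_step E1 KV1.
  by exists V1, E1; split=> //; split=> //; apply/same_reachP.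
apply: (IH V2 E2); [lia | exact: dminor_rcons st | by [] |].
exact: same_reach_trans same same12.
Qed.

Theorem theorem1p1 :
  exists c : nat,
    forall (T : finType) (V : {set T}) (E : {set T * T}) (K : {set T}),
      wf_digraph V E -> K \subset V ->
      exists (V' : {set T}) (E' : {set T * T}),
        is_RPM K V E V' E' /\ rpm_size K V' <= c * #|K| ^ 3 + c.
Proof.
exists 1 => T V E K _ KV.
have [V' [E' [rpm irr]]] := exists_irreducible_RPM E KV.
exists V', E'; split=> //.
by rewrite /rpm_size mul1n; apply: leq_trans (irreducible_minor_card irr) (leq_addr _ _).
Qed.
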